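(* Let $F$ be a field of characteristic zero, $G$ a finite group, and $A$, $B$ $G$-graded PI-algebras over $F$ such that $T_G(A)=T_G(B)$. Then for all positive integers $d_1,\dots,d_m$, \[T_G(UT(d_1,\dots,d_m;A))=T_G(UT(d_1,\dots,d_m;B)).\] Consequently, for every $n\in\mathbb{N}$, $T_G(M_n(A))=T_G(M_n(B))$.
   Context: All algebras are associative and unitary. $F\langle X\rangle$ is the free associative algebra on $X=\bigcup_{g\in G}X^g$ (disjoint countable sets of variables of degree $g$), graded by $G$ in the natural way. For a $G$-graded algebra $A=\bigoplus_gA^g$, $T_G(A)$ is the ideal of graded polynomial identities of $A$, i.e. graded polynomials $f(x_1,\dots,x_t)$ with $f(a_1,\dots,a_t)=0$ for all $a_i\in A^{\deg(x_i)}$. $UT(d_1,\dots,d_m;A)$ is the algebra of block upper-triangular matrices in $M_{d_1+\cdots+d_m}(A)$ with $(r,s)$ block ($r\le s$) an arbitrary $d_r\times d_s$ matrix over $A$ and zero blocks below the diagonal; it and $M_n(A)$ are $G$-graded by letting the degree-$g$ component consist of matrices all of whose entries lie in $A^g$. *)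

From HB Require Import structures.
From mathcomp Require Import all_boot all_order all_algebra all_fingroup.
From mathcomp Require Import finmap.
Set Implicit Arguments. Unset Strict Implicit. Unset Printing Implicit Defensive.
Import GRing.Theory.
Local Open Scope ring_scope.

Section Defs.
Variable F : fieldType.

(* Elements of the free associative unital algebra F<V> on a set of variables V:
   finitely supported functions from words (seq V) to F.  The empty word is 1. *)
Definition freealg (V : choiceType) := {fsfun seq V -> F with 0%R}.

Definition peval (V : choiceType) (R : pzRingType) (s : F -> R -> R)
  (sigma : V -> R) (f : freealg V) : R :=
  \sum_(w <- finsupp f) s (f w) (\prod_(x <- w) sigma x).

(* G-graded variables: x^g_k is (g, k). *)
Definition gpoly (gT : finGroupType) := freealg (gT * nat)%type.

Definition is_gid (gT : finGroupType) (R : pzRingType) (s : F -> R -> R)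
  (hom : gT -> R -> Prop) (f : gpoly gT) : Prop :=
  forall sigma : gT * nat -> R, (forall g k, hom g (sigma (g, k))) ->
    peval s sigma f = 0.

Record grading (gT : finGroupType) (A : algType F) := Grading {
  comp :> gT -> A -> Prop;
  comp0 : forall g, comp g 0;
  compD : forall g (c : F) (a b : A), comp g a -> comp g b -> comp g (c *: a + b);
  comp_sum : forall a : A, exists f : gT -> A,
      (forall g, comp g (f g)) /\ a = \sum_(g : gT) f g;
  comp_direct : forall f : gT -> A,
      (forall g, comp g (f g)) -> \sum_(g : gT) f g = 0 -> forall g, f g = 0;
  compM : forall g h (a b : A), comp g a -> comp h b -> comp (g * h)%g (a * b)
}.

Definition TG (gT : finGroupType) (A : algType F) (GA : grading gT A) :
  gpoly gT -> Prop := is_gid (R := A) *:%R GA.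

Definition PI (A : algType F) : Prop :=
  exists f : freealg nat, (exists w, f w != 0) /\
    forall sigma : nat -> A, peval *:%R sigma f = 0.

Definition mxscale (A : algType F) (n : nat) (c : F) (M : 'M[A]_n) : 'M[A]_n :=
  map_mx (fun a => c *: a) M.

(* block index (0-based) of the row/column index i for block sizes d *)
Definition blk (d : seq nat) (i : nat) : nat :=
  count (fun k => sumn (take k.+1 d) <= i)%N (iota 0 (size d)).

(* UT(d_1,...,d_m; A) as a subset of M_{d_1+...+d_m}(A) *)
Definition is_blockUT (A : algType F) (d : seq nat) (M : 'M[A]_(sumn d)) : Prop :=
  forall i j : 'I_(sumn d), (blk d j < blk d i)%N -> M i j = 0.

Definition UT_hom (gT : finGroupType) (A : algType F) (GA : grading gT A)
  (d : seq nat) (g : gT) (M : 'M[A]_(sumn d)) : Prop :=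
  is_blockUT M /\ forall i j, GA g (M i j).

Definition TG_UT (gT : finGroupType) (A : algType F) (GA : grading gT A)
  (d : seq nat) : gpoly gT -> Prop :=
  is_gid (@mxscale A (sumn d)) (@UT_hom gT A GA d).

Definition M_hom (gT : finGroupType) (A : algType F) (GA : grading gT A)
  (n : nat) (g : gT) (M : 'M[A]_n) : Prop := forall i j, GA g (M i j).

Definition TG_M (gT : finGroupType) (A : algType F) (GA : grading gT A)
  (n : nat) : gpoly gT -> Prop :=
  is_gid (@mxscale A n) (@M_hom gT A GA n).

End Defs.

From HB Require Import structures.
From mathcomp Require Import all_boot all_order all_algebra all_fingroup.
From mathcomp Require Import finmap.
Set Implicit Arguments. Unset Strict Implicit. Unset Printing Implicit Defensive.
Import GRing.Theory.
Local Open Scope ring_scope.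

(* Substitute for each graded variable x^g_k a "generic" matrix whose admissible
   (a, b) entry is a fresh variable x^g_(k,a,b) of the same degree.  The (i, j)
   entry of f at these matrices is a graded polynomial f_ij in the entry
   variables, and every homogeneous substitution of matrices over A is a
   specialisation of the generic one.  Hence f is a graded identity of the
   matrix algebra iff all f_ij lie in T_G(A), so T_G of UT(d_1,...,d_m; A) and
   of M_n(A) depend on T_G(A) only. *)

Section FreeAlgebra.
Variables (F : fieldType) (V : choiceType).

Lemma peval_supp_sub (R : algType F) (sigma : V -> R) (f : freealg F V)
    (S : seq (seq V)) :
  uniq S -> {subset finsupp f <= S} ->
  peval *:%R sigma f = \sum_(w <- S) f w *: \prod_(x <- w) sigma x.
Proof.
move=> uS sub; rewrite /peval [RHS](bigID (fun w => w \in finsupp f)) /=.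
rewrite [X in _ + X]big1 ?addr0; last by move=> w /fsfun_dflt ->; rewrite scale0r.
rewrite -[RHS]big_filter; apply: perm_big; apply: uniq_perm.
- exact: fset_uniq.
- exact: filter_uniq.
by move=> w; rewrite mem_filter; case: (boolP (w \in finsupp f)) => // /sub ->.
Qed.

Definition poly_of_terms (L : seq (F * seq V)) : freealg F V :=
  [fsfun w in seq_fset tt (map snd L) => \sum_(p <- L | p.2 == w) p.1 | 0].

Lemma peval_poly_of_terms (R : algType F) (sigma : V -> R) L :
  peval *:%R sigma (poly_of_terms L) = \sum_(p <- L) p.1 *: \prod_(x <- p.2) sigma x.
Proof.
rewrite (@peval_supp_sub _ _ _ (undup (map snd L))) ?undup_uniq //; last first.
  move=> w; rewrite mem_finsupp mem_undup /poly_of_terms fsfunE seq_fsetE.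
  by case: ifP => // _; rewrite eqxx.
transitivity (\sum_(w <- undup (map snd L)) \sum_(p <- L | p.2 == w)
     p.1 *: \prod_(x <- p.2) sigma x).
  apply: eq_big_seq => w; rewrite mem_undup => wL.
  rewrite /poly_of_terms fsfunE seq_fsetE wL scaler_suml.
  by apply: eq_bigr => p /eqP ->.
rewrite (exchange_big_dep xpredT) //=; apply: eq_big_seq => p pL.
have pL' : p.2 \in undup (map snd L) by rewrite mem_undup map_f.
rewrite big_mkcond /= (bigD1_seq p.2 pL' (undup_uniq _)) eqxx /=.
rewrite [X in _ + X]big1 ?addr0 // => w.
by rewrite eq_sym => /negPf ->.
Qed.

End FreeAlgebra.

Lemma eq_is_gid (F : fieldType) (gT : finGroupType) (R : pzRingType)
    (s : F -> R -> R) (hom1 hom2 : gT -> R -> Prop) :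
  (forall g M, hom1 g M <-> hom2 g M) ->
  forall f, is_gid s hom1 f <-> is_gid s hom2 f.
Proof. by move=> E f; split=> Hf sigma Hs; apply: Hf => g k; apply/E. Qed.

Section PatternMatrices.
Variables (F : fieldType) (gT : finGroupType) (N : nat) (ok : rel 'I_N).

Definition pattern_hom (A : algType F) (GA : grading gT A) g (M : 'M[A]_N) : Prop :=
  (forall a b, ~~ ok a b -> M a b = 0) /\ forall a b, GA g (M a b).

Definition entry_var (k : nat) (a b : 'I_N) : nat := choice.pickle (k, a, b).

(* The words of the (i, j) entry of the product of the generic matrices
   along w: one word per admissible index path from i to j. *)
Fixpoint entry_words (w : seq (gT * nat)) (i j : 'I_N) : seq (seq (gT * nat)) :=
  match w with
  | [::] => if i == j then [:: [::]] else [::]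
  | x :: w' => flatten [seq [seq (x.1, entry_var x.2 i a) :: u | u <- entry_words w' a j]
                       | a <- [seq a <- enum 'I_N | ok i a]]
  end.

Definition entry_poly (f : gpoly F gT) (i j : 'I_N) : gpoly F gT :=
  poly_of_terms (flatten [seq [seq (f w, u) | u <- entry_words w i j] | w <- finsupp f]).

Definition generic_subst (A : algType F) (sigma : gT * nat -> 'M[A]_N)
    (tau : gT * nat -> A) : Prop :=
  forall g k a b, sigma (g, k) a b = if ok a b then tau (g, entry_var k a b) else 0.

Section Evaluation.
Variables (A : algType F) (sigma : gT * nat -> 'M[A]_N) (tau : gT * nat -> A).
Hypothesis sigma_tau : generic_subst sigma tau.

Lemma prod_generic_entry w i j :
  (\prod_(x <- w) sigma x) i j = \sum_(u <- entry_words w i j) \prod_(y <- u) tau y.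
Proof.
elim: w i j => [|[g k] w IH] i j /=.
  by rewrite big_nil !mxE; case: eqP => _; rewrite ?big_seq1 ?big_nil.
rewrite big_cons !mxE big_flatten big_map big_filter /= big_enum_cond /=.
rewrite [RHS]big_mkcond; apply: eq_bigr => a _; rewrite sigma_tau.
case: (ok i a); last by rewrite mul0r.
by rewrite IH mulr_sumr big_map; apply: eq_bigr => u _; rewrite big_cons.
Qed.

Lemma peval_generic_entry f i j :
  peval (@mxscale F A N) sigma f i j = peval *:%R tau (entry_poly f i j).
Proof.
rewrite peval_poly_of_terms /peval summxE big_flatten big_map.
apply: eq_bigr => w _; rewrite mxE prod_generic_entry scaler_sumr big_map.
by apply: eq_bigr.
Qed.

End Evaluation.

Lemma gid_pattern_entry_polys (A : algType F) (GA : grading gT A) f :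
  is_gid (@mxscale F A N) (pattern_hom GA) f <-> forall i j, TG GA (entry_poly f i j).
Proof.
split=> [Hf i j tau Htau | Hf sigma Hs].
- pose sigma (x : gT * nat) : 'M[A]_N :=
    \matrix_(a, b) if ok a b then tau (x.1, entry_var x.2 a b) else 0.
  have sigma_tau : generic_subst sigma tau by move=> g k a b; rewrite mxE.
  rewrite -(peval_generic_entry sigma_tau) Hf ?mxE // => g k.
  split=> a b; rewrite mxE; first by move/negPf ->.
  by case: (ok a b); [apply: Htau | apply: comp0].
- (* Read the entry variables back off the codes; junk codes evaluate to 0. *)
  pose tau (x : gT * nat) : A :=
    if choice.unpickle x.2 is Some (k, a, b) then sigma (x.1, k) a b else 0.
  have sigma_tau : generic_subst sigma tau.
    move=> g k a b; rewrite /tau /entry_var choice.pickleK /=.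
    by case: (boolP (ok a b)) => // /(proj1 (Hs g k) a b).
  apply/matrixP => i j; rewrite (peval_generic_entry sigma_tau) mxE.
  apply: Hf => g m; rewrite /tau /=.
  case: (choice.unpickle m) => [[[k a] b]|]; last exact: comp0.
  exact: (proj2 (Hs g k)).
Qed.

Lemma gid_pattern_eq (A B : algType F) (GA : grading gT A) (GB : grading gT B) :
  (forall f, TG GA f <-> TG GB f) ->
  forall f, is_gid (@mxscale F A N) (pattern_hom GA) f <->
            is_gid (@mxscale F B N) (pattern_hom GB) f.
Proof.
by move=> EAB f; rewrite !gid_pattern_entry_polys; split=> Hf i j; apply/EAB.
Qed.

End PatternMatrices.

Lemma UT_hom_pattern (F : fieldType) (gT : finGroupType) (A : algType F)
    (GA : grading gT A) (d : seq nat) g M :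
  @UT_hom F gT A GA d g M <-> pattern_hom (fun a b => ~~ (blk d b < blk d a)%N) GA g M.
Proof.
rewrite /UT_hom /pattern_hom /is_blockUT.
split=> -[UT hom]; split=> // a b; first by rewrite negbK; apply: UT.
by move=> lt; apply: UT; rewrite negbK.
Qed.

Lemma M_hom_pattern (F : fieldType) (gT : finGroupType) (A : algType F)
    (GA : grading gT A) (n : nat) g M :
  @M_hom F gT A GA n g M <-> pattern_hom (fun _ _ : 'I_n => true) GA g M.
Proof. by rewrite /M_hom /pattern_hom; split=> [hom | [_ hom]]. Qed.

Theorem lemma5p3 (F : fieldType) (gT : finGroupType) (A B : algType F)
  (GA : grading gT A) (GB : grading gT B) :
  [pchar F] =i pred0 -> PI A -> PI B ->
  (forall f, TG GA f <-> TG GB f) ->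
  (forall d : seq nat, (0 < size d)%N -> all (fun k => 0 < k)%N d ->
     forall f, TG_UT GA d f <-> TG_UT GB d f)
  /\ (forall n : nat, forall f, TG_M GA n f <-> TG_M GB n f).
Proof.
move=> _ _ _ EAB; split=> [d _ _ | n] f.
- rewrite /TG_UT (eq_is_gid _ (UT_hom_pattern GA (d := d))) (eq_is_gid _ (UT_hom_pattern GB (d := d))).
  exact: gid_pattern_eq.
- rewrite /TG_M (eq_is_gid _ (M_hom_pattern GA (n := n))) (eq_is_gid _ (M_hom_pattern GB (n := n))).
  exact: gid_pattern_eq.
Qed.
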